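(* Assume the Nested Logit model without outside option described in the context satisfies Assumptions 1 and 2, and suppose the true choice probabilities $\phi(i,S)$ are known for all $S \in \mathcal{S} \cup \{[n]\}$ and $i \in S$ (so all boost factors are known exactly). Then the matrix $E$ returned by Algorithm 2 (described in the context) satisfies $E[i,j] = \mathbf{1}(N(i) = N(j))$ for all $i \neq j$ in $[n]$, except possibly when $|N(i)| = |N(j)| = 1$, in which case $E[i,j]$ may equal $1$.
   Context: Items: $[n]=\{1,\dots,n\}$ with $n\ge 2$. Experiment design: fix an integer base $b \ge 2$, let $L = \lceil \log_b n \rceil$, fix an injective map $\sigma: [n] \to \{0,\dots,b-1\}^L$ with coordinates $\sigma_\ell(i)$, let $S_{\ell,-d} = \{i \in [n] : \sigma_\ell(i) \neq d\}$ for $\ell \in \{1,\dots,L\}$, $d \in \{0,\dots,b-1\}$, and $\mathcal{S} = \{S_{\ell,-d}\}_{\ell,d}$; the control assortment $[n]$ is also offered. Nested Logit model without outside option: $\mathcal{N}$ is a partition of $[n]$ into nests, $N(i)$ the nest containing $i$; weights $v_i > 0$; parameters $\lambda_N \in [0,1]$, with an extra weight $v_N>0$ when $\lambda_N=0$. $v_N(S) = (\sum_{i \in N \cap S} v_i)^{\lambda_N}$ if $\lambda_N \in (0,1]$, $v_N(S) = v_N \mathbf{1}(N \cap S \neq \emptyset)$ if $\lambda_N = 0$. For $i \in S$, $\phi(i,S) = \frac{v_{N(i)}(S)}{\sum_{N \in \mathcal{N}} v_N(S)} \cdot \frac{v_i}{\sum_{j \in N(i) \cap S} v_j}$. Boost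 factor: $\mathsf{BF}(i,S) = \phi(i,S)/\phi(i,[n])$. Multiplier: $\mathsf{Mult}(N,S) = \left(\frac{\sum_{j \in N} v_j}{\sum_{j \in N \cap S} v_j}\right)^{1-\lambda_N}$. Assumption 1: $\lambda_N = 1$ iff $|N| = 1$. Assumption 2: for every $S \in \mathcal{S}$ and distinct nests $N \neq N'$ with $\emptyset \neq N \cap S \neq N$ and $\emptyset \neq N' \cap S \neq N'$, $\mathsf{Mult}(N,S) \neq \mathsf{Mult}(N',S)$. Algorithm 2 maintains a symmetric matrix $E$ with entries $E[i,j] \in \{0,1,\text{null}\}$ for $i \neq j$ (every assignment to $E[i,j]$ is also made to $E[j,i]$), initially all null. (1) For each $S \in \mathcal{S}$ and each pair of distinct $i,j \in S$: if $\mathsf{BF}(i,S) \neq \mathsf{BF}(j,S)$ set $E[i,j] \gets 0$; else if $\mathsf{BF}(i,S) = \mathsf{BF}(j,S) > \min_{k \in S} \mathsf{BF}(k,S)$ set $E[i,j] \gets 1$. (2) For each $S \in \mathcal{S}$ in turn (any order), let $\mathsf{minBF}(S) = \arg\min_{k \in S}\mathsf{BF}(k,S)$; if $E[i,j] = 0$ for some distinct $i,j \in \mathsf{minBF}(S)$, set $E[i,k] \gets 0$ for all $i \in \mathsf{minBF}(S)$ and all $k \notin S$; otherwise set $E[i,j] \gets 1$ for all distinct $i,j \in \mathsf{minBF}(S)$. (3) One-hop transitivity: compute the set of pairs $(i,j)$ with $E[i,j] = \text{null}$ for which some $k \notin \{i,j\}$ has $E[i,k] = E[j,k] = 1$, and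 set all these entries to $1$. (4) Identify missing pairs: compute the set of pairs $(i,j)$ with $E[i,j] = \text{null}$ such that $E[i,k] \neq 1$ and $E[j,k] \neq 1$ for all $k \notin \{i,j\}$, and set all these entries to $1$. (5) Set every remaining null entry to $0$ and return $E$. *)

From HB Require Import structures.
From mathcomp Require Import all_boot all_order all_algebra.
From mathcomp Require Import reals exp.
Set Implicit Arguments. Unset Strict Implicit. Unset Printing Implicit Defensive.
Import Order.TTheory GRing.Theory Num.Theory.
Local Open Scope ring_scope.

Definition Lof (n b : nat) : nat := up_log b n.

Definition Sld (n b L : nat) (sigma : 'I_n -> {ffun 'I_L -> 'I_b})
  (l : 'I_L) (d : 'I_b) : {set 'I_n} := [set i | sigma i l != d].

Definition calS (n b L : nat) (sigma : 'I_n -> {ffun 'I_L -> 'I_b}) : seq {set 'I_n} :=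
  undup [seq Sld sigma l d | l <- enum 'I_L, d <- enum 'I_b].

(* The partition into nests is given by a labelling nest : 'I_n -> 'I_n; the nest
   N(i) is the fibre of nest through i.  lam c and vN c are the parameters lambda_N
   and v_N of the nest with label c. *)
Section NL.
Variables (R : realType) (n : nat) (nest : 'I_n -> 'I_n) (v : 'I_n -> R)
  (lam : 'I_n -> R) (vN : 'I_n -> R).

Definition Nset (i : 'I_n) : {set 'I_n} := [set j | nest j == nest i].
Definition NsetL (c : 'I_n) : {set 'I_n} := [set j | nest j == c].
Definition labels : {set 'I_n} := [set nest i | i in [set: 'I_n]].

Definition wsum (A : {set 'I_n}) : R := \sum_(j in A) v j.

Definition vNest (c : 'I_n) (S : {set 'I_n}) : R :=
  if lam c == 0 then vN c * (NsetL c :&: S != set0)%:R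
  else (wsum (NsetL c :&: S)) `^ (lam c).

Definition phi (i : 'I_n) (S : {set 'I_n}) : R :=
  vNest (nest i) S / (\sum_(c in labels) vNest c S) * (v i / wsum (Nset i :&: S)).

Definition BF (i : 'I_n) (S : {set 'I_n}) : R := phi i S / phi i [set: 'I_n].

Definition Mult (c : 'I_n) (S : {set 'I_n}) : R :=
  (wsum (NsetL c) / wsum (NsetL c :&: S)) `^ (1 - lam c).

Definition partial_in (c : 'I_n) (S : {set 'I_n}) : bool :=
  (NsetL c :&: S != set0) && ~~ (NsetL c \subset S).
End NL.

(* E : 'I_n -> 'I_n -> option bool ; None = null, Some false = 0, Some true = 1.
   Entries are always updated symmetrically; only off-diagonal entries matter. *)
Section Alg.
Variables (R : realType) (n : nat) (bf : 'I_n -> {set 'I_n} -> R).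
Definition Emat := 'I_n -> 'I_n -> option bool.

Definition minBF (S : {set 'I_n}) : {set 'I_n} :=
  [set k in S | [forall k' in S, bf k S <= bf k' S]].

(* Step (1), for one set S: all pairs of distinct i,j in S (the written values
   depend only on S, so the order of the pairs is irrelevant). *)
Definition step1S (E : Emat) (S : {set 'I_n}) : Emat := fun a b =>
  if [&& a != b, a \in S & b \in S] then
    if bf a S != bf b S then Some false
    else if [exists k in S, bf k S < bf a S] then Some true
    else E a b
  else E a b.

Definition step2S (E : Emat) (S : {set 'I_n}) : Emat :=
  let M := minBF S in
  if [exists i in M, exists j in M, (i != j) && (E i j == Some false)] then
    (fun a b => if ((a \in M) && (b \notin S)) || ((b \in M) && (a \notin S))
                then Some false else E a b)
  else
    (fun a b => if [&& a != b, a \in M & b \in M] then Some true else E a b).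

(* Step (3): one-hop transitivity (computed simultaneously). *)
Definition step3 (E : Emat) : Emat := fun a b =>
  if (E a b == None) &&
     [exists k, [&& k != a, k != b, E a k == Some true & E b k == Some true]]
  then Some true else E a b.

(* Step (4): missing pairs (computed simultaneously). *)
Definition step4 (E : Emat) : Emat := fun a b =>
  if (E a b == None) &&
     [forall k, ((k != a) && (k != b)) ==>
                  ((E a k != Some true) && (E b k != Some true))]
  then Some true else E a b.

Definition step5 (E : Emat) : Emat := fun a b =>
  if E a b is Some x then Some x else Some false.

(* s1, s2: the orders in which the sets of \mathcal S are processed in steps 1, 2. *)
Definition algorithm2 (s1 s2 : seq {set 'I_n}) : Emat :=
  step5 (step4 (step3 (foldl step2S (foldl step1S (fun _ _ => None) s1) s2))).
End Alg.

From HB Require Import structures.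
From mathcomp Require Import all_boot all_order all_algebra.
From mathcomp Require Import reals exp.
From mathcomp Require Import ring.
Set Implicit Arguments. Unset Strict Implicit. Unset Printing Implicit Defensive.
Import Order.TTheory GRing.Theory Num.Theory.
Local Open Scope ring_scope.

(* On every tested assortment S, BF(i,S) is a positive multiple (depending on
   S only) of Mult(N(i),S), which is 1 when N(i) is contained in S and > 1
   otherwise (Assumption 1).  With Assumption 2, two items of S therefore have
   equal boost factors iff they share a nest or both their nests lie inside S,
   and the minimal boost factor is attained exactly on the nests inside S, if
   any.  This is all Algorithm 2 relies on: every entry set in steps (1)-(2) is
   correct, except that 1 may be set between two singleton nests, and step (3)
   preserves this.  Since sigma is injective, some S_{l,-d} separates any two
   items, and this makes enough entries set: two members of a nest of size >= 2
   get linked directly, through a third member in step (3), or in step (4) when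
   the nest is just that pair; and an item x of such a nest either has
   E[x,y] = 0 for every y outside its nest or is linked to a nest-mate, which
   prevents step (4) from linking x and y. *)

Lemma foldl_inv (T : Type) (U : eqType) (f : T -> U -> T) (I : T -> Prop)
    (s : seq U) x :
  I x -> (forall y u, u \in s -> I y -> I (f y u)) -> I (foldl f x s).
Proof.
elim: s x => //= u s IH x Ix HI; apply: IH => [|y w ws Iy].
  by apply: HI; rewrite ?mem_head.
by apply: HI; rewrite // in_cons ws orbT.
Qed.

Lemma foldl_after (T : Type) (U : eqType) (f : T -> U -> T) (I P : T -> Prop)
    (s : seq U) x u0 :
  u0 \in s -> I x -> (forall y u, u \in s -> I y -> I (f y u)) ->
  (forall y, I y -> P (f y u0)) ->
  (forall y u, u \in s -> I y -> P y -> P (f y u)) ->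
  P (foldl f x s).
Proof.
case/splitPr=> s' s'' Ix HI HP0 HP; rewrite foldl_cat /=.
have Is' : I (foldl f x s').
  by apply: foldl_inv => // y u us; apply: HI; rewrite mem_cat us.
suff: I (foldl f (f (foldl f x s') u0) s'') /\ P (foldl f (f (foldl f x s') u0) s'').
  by case.
apply: (foldl_inv (I := fun y => I y /\ P y)) => [|y u us [Iy Py]].
  by split; [apply: HI; rewrite ?mem_cat ?mem_head ?orbT | apply: HP0].
have us' : u \in s' ++ u0 :: s'' by rewrite mem_cat in_cons us !orbT.
by split; [apply: HI | apply: HP].
Qed.

Section Coding.
Variables (n b L : nat) (sigma : 'I_n -> {ffun 'I_L -> 'I_b}).

Lemma Sld_calS l d : Sld sigma l d \in calS sigma.
Proof. by rewrite mem_undup; apply/allpairsP; exists (l, d); rewrite !mem_enum. Qed.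

Lemma mem_Sld z l d : (z \in Sld sigma l d) = (sigma z l != d).
Proof. by rewrite inE. Qed.

Lemma coding_neq x y : injective sigma -> x != y ->
  exists l, sigma x l != sigma y l.
Proof.
move=> sigma_inj xy; apply/existsP; apply: contraNT xy => /existsPn same.
by apply/eqP/sigma_inj/ffunP => l; apply/eqP/negbNE/same.
Qed.

End Coding.

Section NestPartition.
Variables (n : nat) (nest : 'I_n -> 'I_n).
Implicit Types (S : {set 'I_n}) (a c i j k x y z : 'I_n) (E : Emat n).

Definition covered x S := Nset nest x \subset S.
Definition single x := #|Nset nest x| == 1%N.
Definition linkable x y := (nest x == nest y) || single x && single y.

Lemma Nset_id x y : nest x = nest y -> Nset nest x = Nset nest y.
Proof. by move=> e; apply/setP => z; rewrite !inE e. Qed.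

Lemma covered_mem S x z : covered x S -> nest z = nest x -> z \in S.
Proof. by move=> /subsetP cov e; apply: cov; rewrite inE e. Qed.

Lemma uncovered S x z : nest z = nest x -> z \notin S -> ~~ covered x S.
Proof. by move=> e; apply: contra => /covered_mem; apply. Qed.

Lemma single_id x y : nest x = nest y -> single x = single y.
Proof. by move=> e; rewrite /single (Nset_id e). Qed.

Lemma linkable_sym x y : linkable x y = linkable y x.
Proof. by rewrite /linkable eq_sym andbC. Qed.

Lemma linkable_trans y x z : linkable x y -> linkable y z -> linkable x z.
Proof.
rewrite /linkable => /orP[/eqP exy|/andP[sx sy]] /orP[/eqP eyz|/andP[sy' sz]].
- by rewrite exy eyz eqxx.
- by rewrite (single_id exy) sy' sz orbT.
- by rewrite sx -(single_id eyz) sy orbT.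
- by rewrite sx sz orbT.
Qed.

Lemma nest_mate x : ~~ single x -> exists2 x', x' != x & nest x' = nest x.
Proof.
move=> nsx; have [y /andP[yx /eqP e]|none] :=
  pickP [pred y | (y != x) && (nest y == nest x)]; first by exists y.
case/negP: nsx; apply/cards1P; exists x; apply/setP => y; rewrite !inE.
by have [->|yx] := eqVneq y x; [rewrite eqxx | move: (none y); rewrite /= yx].
Qed.

Definition sound E := forall a c, a != c ->
  (E a c = Some false -> nest a != nest c) /\ (E a c = Some true -> linkable a c).
Definition symmetric E := forall a c, E a c = E c a.
(* The invariant that stops step (2) from linking two nests lying inside S. *)
Definition separating E := forall x y, ~~ single x -> nest y != nest x ->
  exists2 a, nest a = nest x & E a y = Some false.

Lemma step3_Some E a c w : E a c = Some w -> step3 E a c = Some w.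
Proof. by rewrite /step3 => ->. Qed.

Lemma step3_None E a c : step3 E a c = None -> E a c = None.
Proof. by rewrite /step3; case: ifP. Qed.

Lemma sound_step3 E : sound E -> sound (step3 E).
Proof.
move=> sE a c ac; rewrite /step3; case: ifP => [|_]; last exact: sE.
case/andP=> _ /existsP[k /and4P[ka kc /eqP Eak /eqP Eck]]; split=> // _.
apply: (linkable_trans (y := k)); first by apply: (sE a k _).2; rewrite // eq_sym.
by rewrite linkable_sym; apply: (sE c k _).2; rewrite // eq_sym.
Qed.

Lemma step4_Some E a c w : E a c = Some w -> step4 E a c = Some w.
Proof. by rewrite /step4 => ->. Qed.

Section Steps345.
Variable E : Emat n.
Hypotheses (E_sound : sound E) (E_sym : symmetric E).
Hypothesis link_nest_mates : forall i j k, i != j -> nest i = nest j ->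
  E i j = None -> k != i -> k != j -> nest k = nest i -> E i k = Some true.
Hypothesis split_or_link : forall x y, ~~ single x -> nest y != nest x ->
  E x y = Some false \/ exists a, [/\ a != x, nest a = nest x & E x a = Some true].

Lemma step4_links_isolated_pair i j : nest i = nest j -> ~~ single i ->
    (forall k, k != i -> k != j -> nest k != nest i) -> step3 E i j = None ->
  step4 (step3 E) i j = Some true.
Proof.
move=> eij nsi alone E3ij; rewrite /step4 E3ij eqxx /=; case: ifP => // /negP[].
have sE3 := sound_step3 E_sound.
have nsj : ~~ single j by rewrite -(single_id eij).
apply/forallP => k; apply/implyP => /andP[ki kj]; apply/andP; split;
  apply/negP => /eqP E3k.
- have ik : i != k by rewrite eq_sym.
  move: ((sE3 i k ik).2 E3k); rewrite /linkable (negbTE nsi) orbF => /eqP ek.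
  by move: (alone k ki kj); rewrite ek eqxx.
- have jk : j != k by rewrite eq_sym.
  move: ((sE3 j k jk).2 E3k); rewrite /linkable (negbTE nsj) orbF => /eqP ek.
  by move: (alone k ki kj); rewrite -ek -eij eqxx.
Qed.

Lemma steps345_same_nest i j : i != j -> nest i = nest j -> ~~ single i ->
  step5 (step4 (step3 E)) i j = Some true.
Proof.
move=> ij eij nsi; suff E4 : step4 (step3 E) i j = Some true by rewrite /step5 E4.
case Eij: (E i j) => [[]|]; first exact/step4_Some/step3_Some.
  by move: ((E_sound ij).1 Eij); rewrite eij eqxx.
have [k /and3P[ki kj /eqP eki]|alone] :=
  pickP [pred k | [&& k != i, k != j & nest k == nest i]].
  apply: step4_Some; rewrite /step3 Eij eqxx /=.
  have -> // : [exists k, [&& k != i, k != j, E i k == Some true & E j k == Some true]].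
  have ji : j != i by rewrite eq_sym.
  apply/existsP; exists k; rewrite ki kj (link_nest_mates ij) ?eqxx //.
  by rewrite (link_nest_mates ji) // -?eij // E_sym.
case E3ij: (step3 E i j) => [[]|]; first exact: step4_Some.
  by move: E3ij; rewrite /step3 Eij; case: ifP.
apply: step4_links_isolated_pair => // k ki kj.
by move: (alone k); rewrite /= ki kj => /negbT.
Qed.

Lemma step3_link_mate x y : ~~ single x -> nest y != nest x -> E x y = None ->
  exists a, [/\ a != x, a != y & step3 E x a = Some true].
Proof.
move=> nsx nyx Exy; case: (split_or_link nsx nyx) => [|[a [ax eax Exa]]].
  by rewrite Exy.
exists a; split; [done | | exact: step3_Some].
by apply: contraNneq nyx => <-; rewrite eax.
Qed.

Lemma steps345_diff_nest i j : nest i != nest j -> ~~ (single i && single j) ->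
  step5 (step4 (step3 E)) i j = Some false.
Proof.
move=> nij nsij; suff: step4 (step3 E) i j != Some true.
  by rewrite /step5; case: (step4 (step3 E) i j) => [[]|].
rewrite /step4; case: ifP => [/andP[/eqP/step3_None Eij /forallP mates]|_].
  case/nandP: nsij => [nsi|nsj].
    have nji : nest j != nest i by rewrite eq_sym.
    have [a [ai aj E3ia]] := step3_link_mate nsi nji Eij.
    by move: (mates a); rewrite ai aj E3ia.
  have Eji : E j i = None by rewrite E_sym.
  have [a [aj ai E3ja]] := step3_link_mate nsj nij Eji.
  by move: (mates a); rewrite ai aj E3ja andbF.
apply/negP => /eqP E3ij; have ij : i != j by apply: contraNneq nij => ->.
by move: ((sound_step3 E_sound ij).2 E3ij); rewrite /linkable (negbTE nij) (negbTE nsij).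
Qed.

Lemma steps345_correct i j : i != j -> ~~ (single i && single j) ->
  step5 (step4 (step3 E)) i j = Some (nest i == nest j).
Proof.
move=> ij nsij; have [eij|nij] := eqVneq (nest i) (nest j).
  by apply: steps345_same_nest; rewrite // -(single_id eij) andbb in nsij.
exact: steps345_diff_nest.
Qed.

End Steps345.

Section Algorithm.
Variables (R : realType) (b L : nat) (sigma : 'I_n -> {ffun 'I_L -> 'I_b}).
Hypothesis sigma_inj : injective sigma.
Variable bf : 'I_n -> {set 'I_n} -> R.
Local Notation C := (calS sigma).
Local Notation M := (minBF bf).
Hypothesis eq_bf : forall S, S \in C -> {in S &, forall x y,
  (bf x S == bf y S) = (nest x == nest y) || covered x S && covered y S}.
Hypothesis lt_bf : forall S, S \in C -> {in S &, forall x y,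
  covered x S -> ~~ covered y S -> bf x S < bf y S}.
Variables s1 s2 : seq {set 'I_n}.
Hypotheses (hs1 : perm_eq s1 C) (hs2 : perm_eq s2 C).

Lemma separating_Sld x x' y : nest x' = nest x -> x' != y ->
    (forall S, S \in C -> x \in S -> y \in S -> covered x S) ->
  exists S, [/\ S \in C, x \in S, x' \in S & y \notin S].
Proof.
move=> ex' x'y cov; have [l hl] := coding_neq sigma_inj x'y.
exists (Sld sigma l (sigma y l)); rewrite Sld_calS !mem_Sld eqxx hl.
split=> //; apply: contraT => /negbNE/eqP exy.
have /covered_mem/(_ ex') : covered x (Sld sigma l (sigma x' l)).
  by apply: cov; rewrite ?Sld_calS // !mem_Sld ?exy eq_sym.
by rewrite mem_Sld eqxx.
Qed.

Lemma bf_nest S x y : S \in C -> x \in S -> y \in S -> nest x = nest y ->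
  bf x S = bf y S.
Proof. by move=> SC xS yS e; apply/eqP; rewrite eq_bf // e eqxx. Qed.

Lemma bf_neq_uncovered S x y : S \in C -> x \in S -> y \in S ->
  nest x != nest y -> ~~ covered x S -> bf x S != bf y S.
Proof. by move=> SC xS yS nxy ncx; rewrite eq_bf // (negbTE nxy) (negbTE ncx). Qed.

Lemma le_bf_covered S x k : S \in C -> covered x S -> k \in S -> bf x S <= bf k S.
Proof.
move=> SC cx kS; have xS := covered_mem cx (erefl _).
have [ck|nck] := boolP (covered k S); last exact/ltW/lt_bf.
by have /eqP-> : bf x S == bf k S by rewrite eq_bf // cx ck orbT.
Qed.

Lemma minBF_mem S m : m \in M S -> m \in S.
Proof. by rewrite inE => /andP[]. Qed.

Lemma minBF_le S m k : m \in M S -> k \in S -> bf m S <= bf k S.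
Proof. by rewrite inE => /andP[_ /forall_inP]; apply. Qed.

Lemma minBF_eq S m m' : m \in M S -> m' \in M S -> bf m S = bf m' S.
Proof.
by move=> mM m'M; apply/le_anti; rewrite !minBF_le ?(minBF_mem mM) ?(minBF_mem m'M).
Qed.

Lemma covered_minBF S x : S \in C -> covered x S -> x \in M S.
Proof.
move=> SC cx; rewrite inE (covered_mem cx) //=.
by apply/forall_inP => k; apply: le_bf_covered.
Qed.

Lemma minBF_nest S m y : S \in C -> m \in M S -> y \in S -> nest y = nest m ->
  y \in M S.
Proof.
move=> SC mM yS e; rewrite inE yS /=; apply/forall_inP => k kS.
by rewrite (bf_nest SC yS (minBF_mem mM) e) minBF_le.
Qed.

Lemma notin_minBF S x : x \in S -> x \notin M S -> [exists k in S, bf k S < bf x S].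
Proof.
move=> xS; rewrite inE xS /= => /forall_inPn[k kS]; rewrite -ltNge => lt.
by apply/exists_inP; exists k.
Qed.

(* Minimisers from different nests tie, which by [eq_bf] puts their nests inside [S]. *)
Lemma minBF_split S i j m : S \in C -> i \in M S -> j \in M S ->
  nest i != nest j -> m \in M S -> covered m S.
Proof.
move=> SC iM jM nij mM.
have cov u w : u \in M S -> w \in M S -> nest u != nest w -> covered u S.
  move=> uM wM nuw; move: (eq_bf SC (minBF_mem uM) (minBF_mem wM)).
  by rewrite (minBF_eq uM wM) eqxx (negbTE nuw) => /esym/andP[].
have [emi|nmi] := eqVneq (nest m) (nest i); last exact: cov nmi.
by apply: (cov _ j) => //; rewrite emi.
Qed.

Definition step1_writes S a c := [&& a != c, a \in S & c \in S] &&
  ((bf a S != bf c S) || [exists k in S, bf k S < bf a S]).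

Lemma step1_writes_uncovered S a y : S \in C -> a \in S -> y \in S ->
  nest a != nest y -> ~~ covered a S -> step1_writes S a y.
Proof.
move=> SC aS yS nay nca.
rewrite /step1_writes aS yS bf_neq_uncovered //= !andbT.
by apply: contraNneq nay => ->.
Qed.

Lemma step1SE E S a c : S \in C ->
  step1S bf E S a c = if step1_writes S a c then Some (nest a == nest c) else E a c.
Proof.
move=> SC; rewrite /step1S /step1_writes; case: ifP => [/and3P[ac aS cS]|//].
move: (eq_bf SC aS cS); case: eqVneq => [e|_] /= /esym.
  case: ifP => // /exists_inP[k kS lt] /orP[/eqP->|/andP[ca _]]; first by rewrite eqxx.
  by move: lt; rewrite ltNge (le_bf_covered SC ca kS).
by case/norP=> /negbTE->.
Qed.

Lemma foldl_step1SE E s a c : {subset s <= C} ->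
  foldl (step1S bf) E s a c =
    if has (fun S => step1_writes S a c) s then Some (nest a == nest c) else E a c.
Proof.
elim: s E => //= S s IH E sC.
rewrite IH => [|T Ts]; last by apply: sC; rewrite inE Ts orbT.
by rewrite step1SE ?sC ?mem_head //; case: has; case: step1_writes.
Qed.

Definition E1 := foldl (step1S bf) (fun _ _ => None) s1.

Lemma E1E a c : E1 a c =
  if has (fun S => step1_writes S a c) s1 then Some (nest a == nest c) else None.
Proof. by rewrite /E1 foldl_step1SE // => S; rewrite (perm_mem hs1). Qed.

Lemma E1_written S a c : S \in C -> step1_writes S a c ->
  E1 a c = Some (nest a == nest c).
Proof.
move=> SC w; rewrite E1E; suff -> : has (fun S => step1_writes S a c) s1 by [].
by apply/hasP; exists S; rewrite ?(perm_mem hs1).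
Qed.

Lemma E1_None a c : E1 a c = None -> forall S, S \in C -> ~~ step1_writes S a c.
Proof.
move=> E1n S SC; apply: contraT => /negbNE w.
by rewrite (E1_written SC w) in E1n.
Qed.

Lemma E1_values a c : E1 a c = None \/ E1 a c = Some (nest a == nest c).
Proof. by rewrite E1E; case: has; [right | left]. Qed.

Lemma sound_E1 : sound E1.
Proof.
move=> a c _; case: (E1_values a c) => ->; split=> //; case=> e.
  by rewrite e.
by rewrite /linkable e.
Qed.

Lemma symmetric_E1 : symmetric E1.
Proof.
move=> a c; rewrite !E1E eq_sym; congr (if _ then _ else _).
apply: eq_has => S /=; rewrite /step1_writes (eq_sym c a) (andbC (c \in S)).
by case: (eqVneq (bf a S) (bf c S)) => [->|].
Qed.

Lemma separating_E1 : separating E1.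
Proof.
move=> x y nsx nyx; have [x' x'x ex'] := nest_mate nsx.
have [l hl] := coding_neq sigma_inj x'x.
have nxy : nest x != nest y by rewrite eq_sym.
have nx'y : nest x' != nest y by rewrite ex'.
have [yx|yx] := eqVneq (sigma y l) (sigma x l).
- have SC := Sld_calS sigma l (sigma x' l).
  have xS : x \in Sld sigma l (sigma x' l) by rewrite mem_Sld eq_sym.
  have yS : y \in Sld sigma l (sigma x' l) by rewrite mem_Sld yx eq_sym.
  exists x; rewrite // (E1_written SC) ?(negbTE nxy) //.
  by apply: step1_writes_uncovered SC xS yS nxy (uncovered ex' _); rewrite mem_Sld eqxx.
- have SC := Sld_calS sigma l (sigma x l).
  have x'S : x' \in Sld sigma l (sigma x l) by rewrite mem_Sld.
  have yS : y \in Sld sigma l (sigma x l) by rewrite mem_Sld.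
  exists x'; rewrite // (E1_written SC) ?(negbTE nx'y) //.
  apply: step1_writes_uncovered SC x'S yS nx'y (uncovered (esym ex') _).
  by rewrite mem_Sld eqxx.
Qed.

Definition min_split E S := [exists i in M S, exists j in M S,
  (i != j) && (E i j == Some false)].

Lemma step2SE E S a c : step2S bf E S a c =
  if min_split E S then
    if (a \in M S) && (c \notin S) || (c \in M S) && (a \notin S)
    then Some false else E a c
  else if [&& a != c, a \in M S & c \in M S] then Some true else E a c.
Proof. by rewrite /step2S -/(min_split E S); case: min_split. Qed.

Lemma min_split_covered E S m : S \in C -> sound E -> min_split E S ->
  m \in M S -> covered m S.
Proof.
move=> SC sE /exists_inP[i iM /exists_inP[j jM /andP[ij /eqP Eij]]].
exact: minBF_split iM jM ((sE i j ij).1 Eij).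
Qed.

Lemma min_unsplit_single E S a c : S \in C -> separating E -> ~~ min_split E S ->
  a \in M S -> c \in M S -> nest a != nest c -> single a.
Proof.
move=> SC sepE nsplit aM cM nac; apply: contraNT nsplit => nsa.
have [|a' ea' Ea'c] := sepE a c nsa; first by rewrite eq_sym.
have a'S : a' \in S by apply: covered_mem ea'; exact: (minBF_split SC aM cM nac aM).
apply/exists_inP; exists a'; first exact: minBF_nest aM a'S ea'.
apply/exists_inP; exists c; rewrite // Ea'c eqxx andbT.
by apply: contraNneq nac => <-; rewrite ea'.
Qed.

Lemma step2S_false E S a c : E a c = Some false -> step2S bf E S a c = Some false.
Proof.
move=> Eac; rewrite step2SE; case: ifP => [_|nsplit]; first by case: ifP.
case: ifP => // /and3P[ac aM cM]; suff: min_split E S by rewrite nsplit.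
by apply/exists_inP; exists a => //; apply/exists_inP; exists c; rewrite // ac Eac.
Qed.

Lemma step2S_None E S a c : step2S bf E S a c = None -> E a c = None.
Proof. by rewrite step2SE; case: ifP => _; case: ifP. Qed.

Lemma sound_step2S E S : S \in C -> sound E -> separating E -> sound (step2S bf E S).
Proof.
move=> SC sE sepE a c ac; rewrite step2SE; case: ifP => [split|/negbT nsplit].
  case: ifP => [/orP written|_]; last exact: sE.
  split=> // _; case: written => /andP[mM notS]; apply: contraNneq notS => e.
    exact: covered_mem (min_split_covered SC sE split mM) (esym e).
  exact: covered_mem (min_split_covered SC sE split mM) e.
case: ifP => [/and3P[_ aM cM]|_]; last exact: sE.
split=> // _; rewrite /linkable; have [//|nac] /= := eqVneq (nest a) (nest c).
have nca : nest c != nest a by rewrite eq_sym.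
by rewrite (min_unsplit_single SC sepE nsplit aM cM nac)
           (min_unsplit_single SC sepE nsplit cM aM nca).
Qed.

Lemma symmetric_step2S E S : symmetric E -> symmetric (step2S bf E S).
Proof.
move=> symE a c; rewrite !step2SE (symE a c) (eq_sym c a) orbC.
by rewrite (andbC (c \in M S) (a \in M S)).
Qed.

Definition step2_inv E := [/\ sound E, separating E & symmetric E].

Lemma step2_inv_step E S : S \in C -> step2_inv E -> step2_inv (step2S bf E S).
Proof.
move=> SC [sE sepE symE]; split; [exact: sound_step2S | | exact: symmetric_step2S].
move=> x y nsx nyx; have [a ea Eay] := sepE x y nsx nyx.
by exists a => //; apply: step2S_false.
Qed.

Lemma step2S_keep_link E S a c : S \in C -> step2_inv E -> a != c -> nest a = nest c ->
  E a c = Some true -> step2S bf E S a c = Some true.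
Proof.
move=> SC invE ac e Eac; have [sE' _ _] := step2_inv_step SC invE.
case E'ac: (step2S bf E S a c) => [[]|] //.
  by move: ((sE' a c ac).1 E'ac); rewrite e eqxx.
by rewrite (step2S_None E'ac) in Eac.
Qed.

Definition E2 := foldl (step2S bf) E1 s2.

Lemma step2_inv_E1 : step2_inv E1.
Proof. by split; [exact: sound_E1 | exact: separating_E1 | exact: symmetric_E1]. Qed.

Lemma step2_inv_E2 : step2_inv E2.
Proof.
apply: foldl_inv step2_inv_E1 _ => E S Ss; apply: step2_inv_step.
by rewrite -(perm_mem hs2).
Qed.

Section E2Properties.
Variable P : Emat n -> Prop.
Hypothesis P_step2S : forall E S, S \in C -> step2_inv E -> P E -> P (step2S bf E S).

Lemma E2_from_E1 : P E1 -> P E2.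
Proof.
move=> P1; suff: step2_inv E2 /\ P E2 by case.
apply: (foldl_inv (I := fun E => step2_inv E /\ P E)) => [|E S Ss [invE PE]].
  by split; first exact: step2_inv_E1.
have SC : S \in C by rewrite -(perm_mem hs2).
by split; [apply: step2_inv_step | apply: P_step2S].
Qed.

Lemma E2_after S0 : S0 \in C -> (forall E, step2_inv E -> P (step2S bf E S0)) -> P E2.
Proof.
move=> S0C P0; have s2C S : S \in s2 -> S \in C by rewrite (perm_mem hs2).
apply: (foldl_after (I := step2_inv) (u0 := S0)).
- by rewrite (perm_mem hs2).
- exact: step2_inv_E1.
- by move=> E S /s2C; apply: step2_inv_step.
- exact: P0.
- by move=> E S /s2C; apply: P_step2S.
Qed.

End E2Properties.

Lemma E2_link_uncovered S x k : S \in C -> x != k -> nest x = nest k ->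
  x \in S -> k \in S -> ~~ covered x S -> E2 x k = Some true.
Proof.
move=> SC xk e xS kS ncx.
have keep E T : T \in C -> step2_inv E -> E x k = Some true ->
    step2S bf E T x k = Some true.
  by move=> TC invE; apply: step2S_keep_link.
have [xM|xnM] := boolP (x \in M S); last first.
  apply: (E2_from_E1 keep); rewrite (E1_written SC) ?e ?eqxx //.
  by rewrite /step1_writes xk xS kS notin_minBF ?orbT.
apply: (E2_after keep SC) => E [sE _ _].
rewrite step2SE xk xM (minBF_nest SC xM kS (esym e)) /=.
by case: ifP => // split; case/negP: ncx; apply: min_split_covered split xM.
Qed.

Lemma E2_split_or_link x y : ~~ single x -> nest y != nest x ->
  E2 x y = Some false \/ exists a, [/\ a != x, nest a = nest x & E2 x a = Some true].
Proof.
move=> nsx nyx; have [x' x'x ex'] := nest_mate nsx.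
have nxy : nest x != nest y by rewrite eq_sym.
have keep_false E S : S \in C -> step2_inv E -> E x y = Some false ->
    step2S bf E S x y = Some false.
  by move=> *; apply: step2S_false.
case: (E1_values x y) => [E1n|]; last first.
  by rewrite (negbTE nxy) => E1f; left; apply: E2_from_E1 keep_false E1f.
have cov S : S \in C -> x \in S -> y \in S -> covered x S.
  move=> SC xS yS; apply: contraT => ncx.
  by move: (E1_None E1n SC); rewrite step1_writes_uncovered.
have x'y : x' != y by apply: contraNneq nyx => <-; rewrite ex'.
have [S [SC xS x'S yS]] := separating_Sld ex' x'y cov.
have xx' : x != x' by rewrite eq_sym.
have [cx|ncx] := boolP (covered x S); last first.
  by right; exists x'; split=> //; apply: E2_link_uncovered SC xx' (esym ex') xS x'S ncx.
pose P E := E x y = Some false \/ E x x' = Some true.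
suff: P E2 by case=> ?; [left | right; exists x'].
apply: (E2_after (P := P) _ SC) => [E T TC invE [Ef|Et]|E _].
- by left; apply: step2S_false.
- by right; apply: step2S_keep_link.
have xM := covered_minBF SC cx.
rewrite /P !step2SE xM (negbTE yS) (minBF_nest SC xM x'S ex') xx' /=.
by case: min_split; [left | right].
Qed.

Lemma E2_link_nest_mates i j k : i != j -> nest i = nest j -> E2 i j = None ->
  k != i -> k != j -> nest k = nest i -> E2 i k = Some true.
Proof.
move=> ij eij E2ij ki kj eki.
have cov S : S \in C -> i \in S -> j \in S -> covered i S.
  move=> SC iS jS; apply: contraT => nci.
  by rewrite (E2_link_uncovered SC ij eij iS jS nci) in E2ij.
have [S [SC iS kS jS]] := separating_Sld eki kj cov.
have ik : i != k by rewrite eq_sym.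
exact: E2_link_uncovered SC ik (esym eki) iS kS (uncovered (esym eij) jS).
Qed.

Theorem algorithm2_correct i j : i != j -> ~~ (single i && single j) ->
  algorithm2 bf s1 s2 i j = Some (nest i == nest j).
Proof.
have [sE2 _ symE2] := step2_inv_E2.
exact: steps345_correct sE2 symE2 E2_link_nest_mates E2_split_or_link i j.
Qed.

End Algorithm.
End NestPartition.

Section NestedLogit.
Variables (R : realType) (n : nat) (nest : 'I_n -> 'I_n) (v lam vN : 'I_n -> R).
Hypothesis v_pos : forall i, 0 < v i.
Hypothesis lam_range : forall i, 0 <= lam (nest i) <= 1.
Hypothesis vN_pos : forall i, lam (nest i) = 0 -> 0 < vN (nest i).
Hypothesis assumption1 : forall i, lam (nest i) = 1 <-> #|Nset nest i| = 1%N.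
Implicit Types (S A : {set 'I_n}) (i x y z : 'I_n).

Definition sum_vNest S := \sum_(c in labels nest) vNest nest v lam vN c S.

Lemma wsum_gt0 A z : z \in A -> 0 < wsum v A.
Proof.
move=> zA; rewrite /wsum (bigD1 z) //= ltr_wpDr //.
by apply: sumr_ge0 => j _; apply: ltW.
Qed.

Lemma wsum_Nset_gt0 S i : i \in S -> 0 < wsum v (Nset nest i :&: S).
Proof. by move=> iS; apply: (wsum_gt0 (z := i)); rewrite !inE eqxx. Qed.

Lemma Nset_meet S i : i \in S -> Nset nest i :&: S != set0.
Proof. by move=> iS; apply/set0Pn; exists i; rewrite !inE eqxx. Qed.

Lemma vNest_ge0 c S : c \in labels nest -> 0 <= vNest nest v lam vN c S.
Proof.
case/imsetP=> i _ ->; rewrite /vNest; case: ifP => [/eqP l0|_]; last exact: powR_ge0.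
by rewrite mulr_ge0 ?ler0n ?ltW ?vN_pos.
Qed.

Lemma vNest_gt0 i S : i \in S -> 0 < vNest nest v lam vN (nest i) S.
Proof.
move=> iS; rewrite /vNest; case: ifP => [/eqP l0|_].
  by rewrite (Nset_meet iS) mulr1 vN_pos.
exact/powR_gt0/wsum_Nset_gt0.
Qed.

Lemma sum_vNest_gt0 S i : i \in S -> 0 < sum_vNest S.
Proof.
move=> iS; rewrite /sum_vNest (bigD1 (nest i)) /=; last by apply/imsetP; exists i.
rewrite ltr_wpDr ?vNest_gt0 //.
by apply: sumr_ge0 => c /andP[cl _]; apply: vNest_ge0.
Qed.

Lemma Mult_vNest i S : i \in S ->
  Mult nest v lam (nest i) S =
    vNest nest v lam vN (nest i) S / vNest nest v lam vN (nest i) setT *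
    (wsum v (Nset nest i) / wsum v (Nset nest i :&: S)).
Proof.
move=> iS; have iT := in_setT i.
have w_gt0 := wsum_Nset_gt0 iT; have ws_gt0 := wsum_Nset_gt0 iS.
rewrite setIT in w_gt0.
rewrite /Mult /vNest setIT; change (NsetL nest (nest i)) with (Nset nest i).
set w := wsum v (Nset nest i); set ws := wsum v (Nset nest i :&: S).
have q_gt0 : 0 < w / ws by apply: divr_gt0.
case: ifP => [/eqP l0|/negbT l0].
  rewrite (Nset_meet iS) -(setIT (Nset nest i)) (Nset_meet iT) l0 subr0.
  by rewrite powRr1 ?ltW // mulr1 divff ?mul1r // gt_eqF ?vN_pos.
have w_split : w `^ lam (nest i) = (w / ws) `^ lam (nest i) * ws `^ lam (nest i).
  by rewrite -powRM ?ltW // divfK ?gt_eqF.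
rewrite powRB ?(gt_eqF q_gt0) ?implybT // powRr1 ?ltW // w_split.
have := powR_gt0 (lam (nest i)) ws_gt0; have := powR_gt0 (lam (nest i)) q_gt0.
move=> qp wsp; field.
by rewrite !gt_eqF.
Qed.

Lemma BF_factor i S : i \in S ->
  BF nest v lam vN i S = sum_vNest setT / sum_vNest S * Mult nest v lam (nest i) S.
Proof.
move=> iS; have iT := in_setT i.
rewrite Mult_vNest // /BF /phi -/(sum_vNest S) -/(sum_vNest setT) setIT.
have := v_pos i; have := vNest_gt0 iS; have := vNest_gt0 iT.
have := sum_vNest_gt0 iS; have := sum_vNest_gt0 iT.
have := wsum_Nset_gt0 iS; have := wsum_Nset_gt0 iT; rewrite setIT.
move=> *; field.
by rewrite !gt_eqF.
Qed.

Lemma Mult_covered i S : covered nest i S -> Mult nest v lam (nest i) S = 1.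
Proof.
move=> cov; rewrite /Mult (setIidPl cov) divff ?powR1 //.
by rewrite gt_eqF // (wsum_gt0 (z := i)) // inE.
Qed.

Lemma Mult_gt1 i S : i \in S -> ~~ covered nest i S -> 1 < Mult nest v lam (nest i) S.
Proof.
move=> iS ncov.
have lam_lt1 : lam (nest i) < 1.
  rewrite lt_neqAle (andP (lam_range i)).2 andbT.
  apply: contraNneq ncov => /assumption1/eqP/cards1P[x Nx].
  rewrite /covered Nx sub1set.
  have : i \in Nset nest i by rewrite inE.
  by rewrite Nx inE => /eqP <-.
case/subsetPn: ncov => z zN zS.
have ws_gt0 := wsum_Nset_gt0 iS.
have rest_gt0 : 0 < wsum v (Nset nest i :\: S) by apply: (wsum_gt0 (z := z)); rewrite inE zS.
have q_gt1 : 1 < wsum v (Nset nest i) / wsum v (Nset nest i :&: S).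
  have -> : wsum v (Nset nest i) =
      wsum v (Nset nest i :&: S) + wsum v (Nset nest i :\: S).
    by rewrite /wsum (big_setID S).
  by rewrite ltr_pdivlMr ?mul1r ?ltrDl.
have r_gt0 : 0 < 1 - lam (nest i) by rewrite subr_gt0.
have one_nneg : (1 : R) \is Num.nneg by rewrite nnegrE.
have q_nneg : wsum v (Nset nest i) / wsum v (Nset nest i :&: S) \is Num.nneg.
  by rewrite nnegrE ltW // (lt_trans ltr01 q_gt1).
by have := gt0_ltr_powR r_gt0 one_nneg q_nneg q_gt1; rewrite powR1.
Qed.

Lemma partial_in_uncovered i S : i \in S -> ~~ covered nest i S ->
  partial_in nest (nest i) S.
Proof. by move=> iS ncov; rewrite /partial_in Nset_meet. Qed.

Lemma eq_BF S x y :
    (forall i j, nest i != nest j -> partial_in nest (nest i) S ->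
       partial_in nest (nest j) S ->
       Mult nest v lam (nest i) S != Mult nest v lam (nest j) S) ->
    x \in S -> y \in S ->
  (BF nest v lam vN x S == BF nest v lam vN y S) =
    (nest x == nest y) || covered nest x S && covered nest y S.
Proof.
move=> Mult_inj xS yS; rewrite !BF_factor // (inj_eq (mulfI _)); last first.
  by rewrite gt_eqF // divr_gt0 // (sum_vNest_gt0 xS, sum_vNest_gt0 (in_setT x)).
have [-> /=|nxy /=] := eqVneq (nest x) (nest y); first by rewrite eqxx.
have [cx|ncx] := boolP (covered nest x S); have [cy|ncy] := boolP (covered nest y S).
- by rewrite !Mult_covered ?eqxx.
- by rewrite (Mult_covered cx) eq_sym gt_eqF // Mult_gt1.
- by rewrite (Mult_covered cy) gt_eqF // Mult_gt1.
- by apply/negbTE/Mult_inj; rewrite // partial_in_uncovered.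
Qed.

Lemma lt_BF S x y : x \in S -> y \in S -> covered nest x S -> ~~ covered nest y S ->
  BF nest v lam vN x S < BF nest v lam vN y S.
Proof.
move=> xS yS cx ncy; rewrite !BF_factor // Mult_covered // mulr1.
rewrite -[X in X < _]mulr1 ltr_pM2l ?Mult_gt1 //.
by rewrite divr_gt0 // (sum_vNest_gt0 xS, sum_vNest_gt0 (in_setT x)).
Qed.

End NestedLogit.

Theorem theorem4p8 (R : realType) (n b : nat) (hn : (2 <= n)%N) (hb : (2 <= b)%N)
  (sigma : 'I_n -> {ffun 'I_(Lof n b) -> 'I_b}) (sigma_inj : injective sigma)
  (nest : 'I_n -> 'I_n) (v : 'I_n -> R) (lam : 'I_n -> R) (vN : 'I_n -> R)
  (v_pos : forall i, 0 < v i)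
  (lam_range : forall i, 0 <= lam (nest i) <= 1)
  (vN_pos : forall i, lam (nest i) = 0 -> 0 < vN (nest i))
  (assumption1 : forall i, lam (nest i) = 1 <-> #|Nset nest i| = 1%N)
  (assumption2 : forall S, S \in calS sigma -> forall i j, nest i != nest j ->
      partial_in nest (nest i) S -> partial_in nest (nest j) S ->
      Mult nest v lam (nest i) S != Mult nest v lam (nest j) S)
  (s1 s2 : seq {set 'I_n})
  (hs1 : perm_eq s1 (calS sigma)) (hs2 : perm_eq s2 (calS sigma)) :
  let E := algorithm2 (BF nest v lam vN) s1 s2 in
  forall i j : 'I_n, i != j ->
    ~~ ((#|Nset nest i| == 1%N) && (#|Nset nest j| == 1%N)) ->
    E i j = Some (nest i == nest j).
Proof.
move=> E i j ij nsij; apply: (algorithm2_correct sigma_inj _ _ hs1 hs2 ij nsij).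
- by move=> S SC x y xS yS; apply: eq_BF (assumption2 S SC) xS yS.
- by move=> S SC x y xS yS; apply: lt_BF.
Qed.
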